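(* Let $d$ be a differential on a graded complex vector space. Consider only homotopies $h$ (degree $-1$, $h^2=0$, $hdh=h$) that satisfy $dhd=d$, and write $\pi=1-dh-hd$. If $h$ is such a homotopy, then each of the following $h'$ is such a homotopy, with $\pi'=1-dh'-h'd$ as indicated: (A) $h'=h(1-a\pi)$, $\pi'=(1+dha)\pi$, for any $a\in\operatorname{End}^0$ with $da=\pi a=ad=ah=0$; (B) $h'=(1+dbd)h(1-dbd)$, $\pi'=\pi$, for any $b\in\operatorname{End}^{-2}$ with $\pi b=hb=bh=b\pi=0$; (C) $h'=(1-\pi c)h$, $\pi'=\pi(1+chd)$, for any $c\in\operatorname{End}^0$ with $hc=dc=c\pi=cd=0$. Moreover any two such homotopies $h,h'$ are related by a composition of transformations of types A, B, C: if $h_A$ is obtained from $h$ by (A) with $a=-dh'\pi$, $h_B$ from $h_A$ by (B) with $b=-h_Adh'h_A$, and $h_C$ from $h_B$ by (C) with $c=-\pi_Bh'd$ (where $\pi_B=1-dh_B-h_Bd$), then $h_C=h'$. *)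

(* Graded complex vector spaces are modelled internally:
   a module W over the complex numbers R[i] (R : realType, i.e. the reals)
   together with a family of homogeneous subspaces Wn n (n : int) of which
   W is the (internal) direct sum. *)
From HB Require Import structures.
From mathcomp Require Import all_boot all_order all_algebra.
From mathcomp Require Import reals.
From mathcomp Require Import complex.
Set Implicit Arguments. Unset Strict Implicit. Unset Printing Implicit Defensive.
Import Order.TTheory GRing.Theory Num.Theory.
Local Open Scope ring_scope.

Section Graded.
Variables (R : realType) (W : lmodType R[i]) (Wn : int -> {pred W}).

Definition is_grading : Prop :=
  [/\ forall n, (0 : W) \in Wn n,
      forall n (a : R[i]) (x y : W), x \in Wn n -> y \in Wn n -> a *: x + y \in Wn n,
      forall w : W, exists (s : seq int) (f : int -> W),
          [/\ uniq s, forall n, f n \in Wn n & w = \sum_(n <- s) f n]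
    & forall (s : seq int) (f : int -> W), uniq s -> (forall n, f n \in Wn n) ->
          \sum_(n <- s) f n = 0 -> forall n, n \in s -> f n = 0].

Definition lin (f : W -> W) : Prop :=
  forall (a : R[i]) (u v : W), f (a *: u + v) = a *: f u + f v.

Definition End_deg (k : int) (f : W -> W) : Prop :=
  lin f /\ forall n x, x \in Wn n -> f x \in Wn (n + k).

Definition differential (d : W -> W) : Prop :=
  End_deg 1 d /\ d \o d = (fun=> 0).

Definition piH (d h : W -> W) : W -> W := fun x => x - d (h x) - h (d x).

Definition good_homotopy (d h : W -> W) : Prop :=
  [/\ End_deg (-1) h, h \o h = (fun=> 0), h \o d \o h = h & d \o h \o d = d].

End Graded.

From HB Require Import structures.
From mathcomp Require Import all_boot all_order all_algebra.
From mathcomp Require Import reals.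
From mathcomp Require Import complex.
From mathcomp Require Import ring.
From Stdlib Require Import FunctionalExtensionality.
Import GRing.Theory.
Set Implicit Arguments. Unset Strict Implicit.
Local Open Scope ring_scope.

(** Every claim is an identity between composites of d, h, h' and the
   correction terms, so it is checked pointwise: linearity pushes each map
   inside sums, the relations d^2 = h^2 = 0, hdh = h, dhd = d (and
   pi d = d pi = pi h = h pi = 0, pi^2 = pi, which follow from them) cancel
   all reducible words, and what remains is an identity in an abelian group.
   In particular (A), (B) and (C) need no side condition on a, b, c beyond
   their degree.
   For two such homotopies h and k, the three corrections of the statement
   successively turn h into hdk - hdkhd, then hdk - dkhdk, then k. *)

Section TrivialExtension.
Variable V : zmodType.

Definition trivext := (int * V)%type.
HB.instance Definition _ := GRing.Zmodule.on trivext.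

Definition trivext_mul (x y : trivext) : trivext :=
  (x.1 * y.1, x.2 *~ y.1 + y.2 *~ x.1).

Lemma trivext_mulA : associative trivext_mul.
Proof.
move=> [a u] [b v] [c w]; rewrite /trivext_mul /=; congr (_, _).
  by rewrite mulrA.
by rewrite !mulrzDl -!mulrzA addrA (mulrC c a) (mulrC b a).
Qed.

Lemma trivext_mulC : commutative trivext_mul.
Proof. by move=> [a u] [b v]; rewrite /trivext_mul /= mulrC addrC. Qed.

Lemma trivext_mul1 : left_id (1, 0) trivext_mul.
Proof. by move=> [a u]; rewrite /trivext_mul /= mul1r mul0rz add0r mulr1z. Qed.

Lemma trivext_mulDl : left_distributive trivext_mul +%R.
Proof.
move=> [a u] [b v] [c w]; rewrite /trivext_mul /=; congr (_, _).
  by rewrite mulrDl.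
by rewrite mulrzDl mulrzDr addrACA.
Qed.

Lemma trivext_one_neq0 : ((1, 0) : trivext) != 0.
Proof. by []. Qed.

HB.instance Definition _ := GRing.Zmodule_isComNzRing.Build trivext
  trivext_mulA trivext_mulC trivext_mul1 trivext_mulDl trivext_one_neq0.

Definition trivext_embed (v : V) : trivext := (0, v).

Lemma trivext_embed_is_zmod_morphism : zmod_morphism trivext_embed.
Proof. by []. Qed.

HB.instance Definition _ := GRing.isZmodMorphism.Build V trivext trivext_embed
  trivext_embed_is_zmod_morphism.

Lemma trivext_embed_inj : injective trivext_embed.
Proof. by move=> u v []. Qed.
End TrivialExtension.

(* [ring] only works in commutative rings: an identity in a Z-module V is
   decided by transporting it along the additive embedding of V into the
   trivial extension Z x V, where V squares to zero. *)
Ltac zmod_ring := apply: trivext_embed_inj; ring.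

Section LinearMaps.
Variables (R : realType) (W : lmodType R[i]).
Implicit Types f : W -> W.

Lemma lin0 f : lin f -> f 0 = 0.
Proof.
move=> Lf; have := Lf 1 0 0; rewrite !scale1r addr0 => /eqP.
by rewrite eq_sym -subr_eq0 addrK => /eqP.
Qed.

Lemma linD f : lin f -> {morph f : u v / u + v}.
Proof. by move=> Lf u v; rewrite -[u]scale1r Lf !scale1r. Qed.

Lemma linN f : lin f -> {morph f : u / - u}.
Proof. by move=> Lf u; rewrite -[- u]addr0 -scaleN1r Lf (lin0 Lf) addr0 scaleN1r. Qed.

Definition lin_rules f (Lf : lin f) := (linD Lf, linN Lf, lin0 Lf).
End LinearMaps.

Section GradedMaps.
Variables (R : realType) (W : lmodType R[i]) (Wn : int -> {pred W}).
Hypothesis grading : is_grading Wn.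
Implicit Types f g : W -> W.

Lemma End_id : End_deg Wn 0 id.
Proof. by split => // n x; rewrite addr0. Qed.

Lemma End_comp k1 k2 k f g :
  End_deg Wn k1 f -> End_deg Wn k2 g -> k1 + k2 = k -> End_deg Wn k (g \o f).
Proof.
move=> [Lf Ef] [Lg Eg] <-; split; first by move=> a u v /=; rewrite Lf Lg.
by move=> n x Wx /=; rewrite addrA; apply/Eg/Ef.
Qed.

Lemma End_add k f g : End_deg Wn k f -> End_deg Wn k g -> End_deg Wn k (f \+ g).
Proof.
case: grading => _ Wlin _ _ [Lf Ef] [Lg Eg]; split.
  by move=> a u v /=; rewrite Lf Lg scalerDr addrACA.
by move=> n x Wx /=; rewrite -[f x]scale1r; apply/Wlin; [apply: Ef | apply: Eg].
Qed.

Lemma End_opp k f : End_deg Wn k f -> End_deg Wn k (\- f).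
Proof.
case: grading => W0 Wlin _ _ [Lf Ef]; split.
  by move=> a u v /=; rewrite Lf opprD scalerN.
by move=> n x Wx /=; rewrite -scaleN1r -[_ *: _]addr0; apply/Wlin/W0/Ef.
Qed.

Lemma End_sub k f g : End_deg Wn k f -> End_deg Wn k g -> End_deg Wn k (f \- g).
Proof. by move=> Ef Eg; apply/End_add/End_opp. Qed.
End GradedMaps.
Arguments End_id {R W Wn}.

Section GoodHomotopy.
Variables (R : realType) (W : lmodType R[i]) (Wn : int -> {pred W}) (d h : W -> W).
Hypotheses (Dd : differential Wn d) (Hh : good_homotopy Wn d h).

Lemma good_homotopy_pointwise (g : W -> W) : End_deg Wn (-1) g ->
    (forall x, g (g x) = 0) -> (forall x, g (d (g x)) = g x) ->
    (forall x, d (g (d x)) = d x) ->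
  good_homotopy Wn d g.
Proof.
by move=> Eg gg gdg dgd; split => //; apply: functional_extensionality.
Qed.

Lemma End_d : End_deg Wn 1 d. Proof. by case: Dd. Qed.
Lemma End_h : End_deg Wn (-1) h. Proof. by case: Hh. Qed.
Lemma lin_d : lin d. Proof. by case: End_d. Qed.
Lemma lin_h : lin h. Proof. by case: End_h. Qed.

Lemma d_d x : d (d x) = 0.
Proof. by case: Dd => _ /(congr1 (@^~ x)). Qed.
Lemma h_h x : h (h x) = 0.
Proof. by case: Hh => _ /(congr1 (@^~ x)). Qed.
Lemma h_d_h x : h (d (h x)) = h x.
Proof. by case: Hh => _ _ /(congr1 (@^~ x)). Qed.
Lemma d_h_d x : d (h (d x)) = d x.
Proof. by case: Hh => _ _ _ /(congr1 (@^~ x)). Qed.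

Definition homotopy_rules := (lin_rules lin_d, lin_rules lin_h,
  d_d, h_h, h_d_h, d_h_d, @opprK W, @oppr0 W, @addr0 W, @add0r W).

Lemma End_piH : is_grading Wn -> End_deg Wn 0 (piH d h).
Proof.
move=> grading.
have Edh : End_deg Wn 0 (d \o h) by apply: End_comp End_h End_d _.
have Ehd : End_deg Wn 0 (h \o d) by apply: End_comp End_d End_h _.
exact (End_sub grading (End_sub grading End_id Edh) Ehd).
Qed.

Lemma lin_piH : lin (piH d h).
Proof. by move=> a u v; rewrite /piH !(lin_d, lin_h) scalerBr !opprD; zmod_ring. Qed.

Lemma piH_d x : piH d h (d x) = 0.
Proof. by rewrite /piH ?homotopy_rules; zmod_ring. Qed.
Lemma d_piH x : d (piH d h x) = 0.
Proof. by rewrite /piH ?homotopy_rules; zmod_ring. Qed.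
Lemma piH_h x : piH d h (h x) = 0.
Proof. by rewrite /piH ?homotopy_rules; zmod_ring. Qed.
Lemma h_piH x : h (piH d h x) = 0.
Proof. by rewrite /piH ?homotopy_rules; zmod_ring. Qed.
Lemma piH_idem x : piH d h (piH d h x) = piH d h x.
Proof. by rewrite {1}/piH d_piH h_piH (lin0 lin_d) (lin0 lin_h) !subr0. Qed.

Definition projector_rules :=
  (lin_rules lin_piH, piH_d, d_piH, piH_h, h_piH, piH_idem).
End GoodHomotopy.

Section Transformations.
Variables (R : realType) (W : lmodType R[i]) (Wn : int -> {pred W}) (d : W -> W).
Hypotheses (grading : is_grading Wn) (Dd : differential Wn d).

Definition transformA (h a : W -> W) := h \o (id \- (a \o piH d h)).
Definition transformB (h b : W -> W) :=
  (id \+ (d \o b \o d)) \o h \o (id \- (d \o b \o d)).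
Definition transformC (h c : W -> W) := (id \- (piH d h \o c)) \o h.

Variable h : W -> W.
Hypothesis Hh : good_homotopy Wn d h.

Let rules := (homotopy_rules Dd Hh, projector_rules Dd Hh).

Lemma good_transformA a : End_deg Wn 0 a -> good_homotopy Wn d (transformA h a).
Proof.
move=> Ea; have La : lin a by case: Ea.
have EaP : End_deg Wn 0 (a \o piH d h) by apply: End_comp (End_piH Dd Hh grading) Ea _.
have EhA : End_deg Wn (-1) (transformA h a).
  by apply: End_comp (End_sub grading End_id EaP) (End_h Hh) _.
apply: good_homotopy_pointwise EhA _ _ _ => x.
all: by rewrite /transformA /= ?(rules, lin_rules La); zmod_ring.
Qed.

Lemma piH_transformA a : lin a ->
  piH d (transformA h a) = (id \+ (d \o h \o a)) \o piH d h.
Proof.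
move=> La; apply: functional_extensionality => x.
by rewrite /transformA /piH /= ?(rules, lin_rules La); zmod_ring.
Qed.

Lemma good_transformB b : End_deg Wn (-2) b -> good_homotopy Wn d (transformB h b).
Proof.
move=> Eb; have Lb : lin b by case: Eb.
have Edbd : End_deg Wn 0 (d \o b \o d).
  by apply: End_comp (End_d Dd) (End_comp Eb (End_d Dd) _) _.
have EhB : End_deg Wn (-1) (transformB h b).
  apply: End_comp (End_sub grading End_id Edbd)
    (End_comp (End_h Hh) (End_add grading End_id Edbd) _) _ => //.
apply: good_homotopy_pointwise EhB _ _ _ => x.
all: by rewrite /transformB /= ?(rules, lin_rules Lb); zmod_ring.
Qed.

Lemma piH_transformB b : lin b -> piH d (transformB h b) = piH d h.
Proof.
move=> Lb; apply: functional_extensionality => x.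
by rewrite /transformB /piH /= ?(rules, lin_rules Lb); zmod_ring.
Qed.

Lemma good_transformC c : End_deg Wn 0 c -> good_homotopy Wn d (transformC h c).
Proof.
move=> Ec; have Lc : lin c by case: Ec.
have EPc : End_deg Wn 0 (piH d h \o c) by apply: End_comp Ec (End_piH Dd Hh grading) _.
have EhC : End_deg Wn (-1) (transformC h c).
  by apply: End_comp (End_h Hh) (End_sub grading End_id EPc) _.
apply: good_homotopy_pointwise EhC _ _ _ => x.
all: by rewrite /transformC /= ?(rules, lin_rules Lc); zmod_ring.
Qed.

Lemma piH_transformC c : lin c ->
  piH d (transformC h c) = piH d h \o (id \+ (c \o h \o d)).
Proof.
move=> Lc; apply: functional_extensionality => x.
by rewrite /transformC /piH /= ?(rules, lin_rules Lc); zmod_ring.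
Qed.
End Transformations.

Section Relation.
Variables (R : realType) (W : lmodType R[i]) (Wn : int -> {pred W}) (d h k : W -> W).
Hypotheses (grading : is_grading Wn) (Dd : differential Wn d).
Hypotheses (Hh : good_homotopy Wn d h) (Hk : good_homotopy Wn d k).

Let a := \- (d \o k \o piH d h).
Let hA := transformA d h a.
Let b := \- (hA \o d \o k \o hA).
Let hB := transformB d hA b.
Let c := \- (piH d hB \o k \o d).

Let rules := (homotopy_rules Dd Hh, projector_rules Dd Hh, homotopy_rules Dd Hk).

Lemma End_a : End_deg Wn 0 a.
Proof.
rewrite /a; apply: (End_opp grading).
by apply: End_comp (End_piH Dd Hh grading) (End_comp (End_h Hk) (End_d Dd) _) _.
Qed.

Lemma admissibleA : End_deg Wn 0 a /\ [/\ d \o a = (fun=> 0),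
  piH d h \o a = (fun=> 0), a \o d = (fun=> 0) & a \o h = (fun=> 0)].
Proof.
split; first exact: End_a.
by split; apply: functional_extensionality => x; rewrite /a /= ?rules.
Qed.

Lemma good_hA : good_homotopy Wn d hA.
Proof. exact (good_transformA grading Dd Hh End_a). Qed.

Lemma hA_formula x : hA x = h (d (k x)) - h (d (k (h (d x)))).
Proof. by rewrite /hA /transformA /a /= ?rules /piH ?rules; zmod_ring. Qed.

Lemma End_b : End_deg Wn (-2) b.
Proof.
rewrite /b; apply: (End_opp grading).
have EhAd : End_deg Wn 0 (hA \o d) by apply: End_comp (End_d Dd) (End_h good_hA) _.
have EhAdk : End_deg Wn (-1) (hA \o d \o k) by apply: End_comp (End_h Hk) EhAd _.
by apply: End_comp (End_h good_hA) EhAdk _.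
Qed.

Lemma admissibleB : End_deg Wn (-2) b /\ [/\ piH d hA \o b = (fun=> 0),
  hA \o b = (fun=> 0), b \o hA = (fun=> 0) & b \o piH d hA = (fun=> 0)].
Proof.
split; first exact: End_b.
split; apply: functional_extensionality => x; rewrite /b /=;
  by rewrite ?(rules, lin_rules (lin_h good_hA), lin_rules (lin_piH Dd good_hA),
    h_h good_hA, piH_h Dd good_hA, h_piH good_hA).
Qed.

Lemma dbd_formula x : d (b (d x)) = - d (k (h (d x))).
Proof. by rewrite /b /= !hA_formula ?rules; zmod_ring. Qed.

Lemma hB_formula x : hB x = h (d (k x)) - d (k (h (d (k x)))).
Proof. by rewrite /hB /transformB /= !dbd_formula !hA_formula ?rules; zmod_ring. Qed.

Lemma good_hB : good_homotopy Wn d hB.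
Proof. exact (good_transformB grading Dd good_hA End_b). Qed.

Lemma piH_hB_formula x : piH d hB x = x - d (k x) - h (d x) + d (k (h (d x))).
Proof. by rewrite /piH !hB_formula ?rules; zmod_ring. Qed.

Lemma End_c : End_deg Wn 0 c.
Proof.
rewrite /c; apply: (End_opp grading).
by apply: End_comp (End_d Dd) (End_comp (End_h Hk) (End_piH Dd good_hB grading) _) _.
Qed.

Lemma admissibleC : End_deg Wn 0 c /\ [/\ hB \o c = (fun=> 0),
  d \o c = (fun=> 0), c \o piH d hB = (fun=> 0) & c \o d = (fun=> 0)].
Proof.
split; first exact: End_c.
split; apply: functional_extensionality => x; rewrite /c /=;
  by rewrite ?(rules, lin_rules (lin_h good_hB), lin_rules (lin_piH Dd good_hB),
    h_h good_hB, piH_h Dd good_hB, h_piH good_hB, piH_d Dd good_hB, d_piH Dd good_hB).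
Qed.

Lemma transformC_hB : transformC d hB c = k.
Proof.
apply: functional_extensionality => x.
by rewrite /transformC /c /= !piH_hB_formula !hB_formula ?rules; zmod_ring.
Qed.
End Relation.

Theorem mainTheorem3 (R : realType) (W : lmodType R[i]) (Wn : int -> {pred W})
  (d : W -> W) :
  is_grading Wn -> differential Wn d ->
  (* (A) *)
  (forall h a : W -> W, good_homotopy Wn d h ->
     End_deg Wn 0 a -> d \o a = (fun=> 0) -> piH d h \o a = (fun=> 0) ->
     a \o d = (fun=> 0) -> a \o h = (fun=> 0) ->
     let h' := h \o (id \- (a \o piH d h)) in
     good_homotopy Wn d h' /\
     piH d h' = (id \+ (d \o h \o a)) \o piH d h) /\
  (* (B) *)
  (forall h b : W -> W, good_homotopy Wn d h ->
     End_deg Wn (-2) b -> piH d h \o b = (fun=> 0) -> h \o b = (fun=> 0) ->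
     b \o h = (fun=> 0) -> b \o piH d h = (fun=> 0) ->
     let h' := (id \+ (d \o b \o d)) \o h \o (id \- (d \o b \o d)) in
     good_homotopy Wn d h' /\ piH d h' = piH d h) /\
  (* (C) *)
  (forall h c : W -> W, good_homotopy Wn d h ->
     End_deg Wn 0 c -> h \o c = (fun=> 0) -> d \o c = (fun=> 0) ->
     c \o piH d h = (fun=> 0) -> c \o d = (fun=> 0) ->
     let h' := (id \- (piH d h \o c)) \o h in
     good_homotopy Wn d h' /\
     piH d h' = piH d h \o (id \+ (c \o h \o d))) /\
  (* any two such homotopies are related by A, then B, then C *)
  (forall h h' : W -> W, good_homotopy Wn d h -> good_homotopy Wn d h' ->
     let a := \- (d \o h' \o piH d h) in
     let hA := h \o (id \- (a \o piH d h)) in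
     let b := \- (hA \o d \o h' \o hA) in
     let hB := (id \+ (d \o b \o d)) \o hA \o (id \- (d \o b \o d)) in
     let c := \- (piH d hB \o h' \o d) in
     let hC := (id \- (piH d hB \o c)) \o hB in
     [/\ End_deg Wn 0 a /\ [/\ d \o a = (fun=> 0), piH d h \o a = (fun=> 0),
                               a \o d = (fun=> 0) & a \o h = (fun=> 0)],
         End_deg Wn (-2) b /\ [/\ piH d hA \o b = (fun=> 0), hA \o b = (fun=> 0),
                               b \o hA = (fun=> 0) & b \o piH d hA = (fun=> 0)],
         End_deg Wn 0 c /\ [/\ hB \o c = (fun=> 0), d \o c = (fun=> 0),
                               c \o piH d hB = (fun=> 0) & c \o d = (fun=> 0)]
       & hC = h']).
Proof.
move=> grading Dd; split; [|split; [|split]].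
- move=> h a Hh Ea _ _ _ _ h'; have [La _] := Ea.
  exact: (conj (good_transformA grading Dd Hh Ea) (piH_transformA Dd Hh La)).
- move=> h b Hh Eb _ _ _ _ h'; have [Lb _] := Eb.
  exact: (conj (good_transformB grading Dd Hh Eb) (piH_transformB Dd Hh Lb)).
- move=> h c Hh Ec _ _ _ _ h'; have [Lc _] := Ec.
  exact: (conj (good_transformC grading Dd Hh Ec) (piH_transformC Dd Hh Lc)).
move=> h k Hh Hk a hA b hB c hC; split.
- exact: (admissibleA grading Dd Hh Hk).
- exact: (admissibleB grading Dd Hh Hk).
- exact: (admissibleC grading Dd Hh Hk).
exact: (transformC_hB Dd Hh Hk).
Qed.
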